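(* Let $p$ be a prime and $M$ an $m'\times m$ matrix over $\mathbb{F}_p$. Let $1\le L\le p$ be an integer and $\mathbf{L}=(L_1,\dots,L_m)$ integers with $L\le L_i\le2L$. For $\mathbf{b}\in\mathbb{Z}^{m'}$ and $D\subseteq\mathbb{Z}^m$ set $S(\mathbf{b};D)=\{\mathbf{x}\in D: M\mathbf{x}\equiv\mathbf{b}\pmod p\}$. Then for every $\mathbf{N}\in\mathbb{Z}^m$ and every $\mathbf{b}$, $$|S(\mathbf{b};[\mathbf{N},\mathbf{N}+\mathbf{L}])|\le|S(\mathbf{0};[-\mathbf{L},\mathbf{L}])|,$$ and if $M$ has rank $\min\{m',m\}$ over $\mathbb{F}_p$, then $$|S(\mathbf{0};[-\mathbf{L},\mathbf{L}])|\ll_mL^{\dim\ker M},$$ where $\ker M$ is the kernel of $M$ acting on $\mathbb{F}_p^m$.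
   Context: $[\mathbf{N},\mathbf{N}+\mathbf{L}]=\prod_{i=1}^m\{x\in\mathbb{Z}:N_i\le x\le N_i+L_i\}$ and $[-\mathbf{L},\mathbf{L}]=\prod_{i=1}^m\{x\in\mathbb{Z}:-L_i\le x\le L_i\}$. *)

From HB Require Import structures.
From mathcomp Require Import all_boot all_order all_algebra.
Set Implicit Arguments. Unset Strict Implicit. Unset Printing Implicit Defensive.
Import Order.TTheory GRing.Theory Num.Theory.
Local Open Scope ring_scope.

Definition modp_vec (p k : nat) (x : 'cV[int]_k) : 'cV['F_p]_k :=
  map_mx (fun z : int => z%:~R) x.

(* |S(b; [lo, lo + w])| = #{ x in Z^m : lo_i <= x_i <= lo_i + w_i for all i,
                                        M x = b (mod p) }.
   The box is enumerated by offsets y with 0 <= y_i <= w_i (x = lo + y);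
   offsets are stored in 'I_W with W := 1 + max_i w_i, which is large enough. *)
Definition boxcount (p m' m : nat) (M : 'M['F_p]_(m', m)) (b : 'cV[int]_m')
    (lo : 'cV[int]_m) (w : 'I_m -> nat) : nat :=
  #|[set y : {ffun 'I_m -> 'I_((\max_(i < m) w i).+1)} |
      [forall i, (y i <= w i)%N] &&
      (M *m modp_vec p (\col_i (lo i 0 + (y i : nat)%:Z)) == modp_vec p b)]|.

(* dim ker M, where ker M = { x in F_p^m : M x = 0 }.  kermx A is the left
   kernel {u : u *m A = 0}, so ker M (acting on columns) is kermx M^T. *)
Definition dimker (p m' m : nat) (M : 'M['F_p]_(m', m)) : nat :=
  \rank (kermx M^T).

From HB Require Import structures.
From mathcomp Require Import all_boot all_order all_algebra.
From mathcomp Require Import zify.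
Import Order.TTheory GRing.Theory Num.Theory.
Local Open Scope ring_scope.
Set Implicit Arguments.
Unset Strict Implicit.

(* Subtracting one solution from all others maps the solutions in the box
   N + [0, L] injectively to solutions with right-hand side 0 in [-L, L].
   For the size of the latter, choose \rank M linearly independent columns
   of M (pivots): a solution is determined modulo p by its coordinates off
   the pivots, hence by those coordinates (at most 4L + 1 <= 5L values each)
   together with the quotients by p of its pivot coordinates (at most 5 values
   each, as the box has side 4L <= 4p).  This gives at most
   5^m L^(m - rank M) = 5^m L^(dim ker M) solutions. *)

Lemma modp_vecB p k (a c : 'cV[int]_k) :
  modp_vec p (a - c) = modp_vec p a - modp_vec p c.
Proof. by apply/matrixP => i j; rewrite !mxE intrB. Qed.

Lemma modp_vec0 p k : modp_vec p (0 : 'cV[int]_k) = 0.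
Proof. by apply/matrixP => i j; rewrite !mxE. Qed.

Lemma Fp_nat_eqmod p a b : prime p -> (a%:R : 'F_p) = b%:R -> (a = b %[mod p])%N.
Proof. by move=> p_pr /(congr1 val); rewrite /= !val_Fp_nat. Qed.

Lemma card_ord_lt W c : (#|[pred k : 'I_W | (k < c)%N]| <= c)%N.
Proof.
rewrite cardE -(size_map val) -[X in (_ <= X)%N](size_iota 0 c).
apply: uniq_leq_size; first by rewrite map_inj_uniq ?enum_uniq //; exact: val_inj.
by move=> x /mapP[k]; rewrite mem_enum inE => k_lt ->; rewrite mem_iota.
Qed.

Section Pivots.

Variables (F : fieldType) (m' m : nat) (M : 'M[F]_(m', m)).

Definition pivots : {set 'I_m} := maxrankfun M^T @: setT.

Lemma card_pivots : #|pivots| = \rank M.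
Proof.
by rewrite card_imset ?cardsT ?card_ord ?mxrank_tr //; exact: maxrankfun_inj.
Qed.

Lemma card_off_pivots : #|~: pivots| = (m - \rank M)%N.
Proof. by rewrite cardsCs setCK card_ord card_pivots. Qed.

Lemma ker_eq0_off_pivots (z : 'cV[F]_m) :
  M *m z = 0 -> {in ~: pivots, forall i, z i 0 = 0} -> z = 0.
Proof.
move=> Mz0 z_off.
pose f := maxrankfun M^T; pose u : 'rV_(\rank M^T) := \row_k z (f k) 0.
have u_ker : u *m rowsub f M^T = 0.
  apply/rowP => j; have := congr1 (fun A : 'cV__ => A j 0) Mz0.
  rewrite !mxE => Mz0j; rewrite -[RHS]Mz0j [RHS](bigID (mem pivots)) /=.
  rewrite [X in _ = _ + X]big1; last first.
    by move=> i i_off; rewrite z_off ?mulr0 // inE.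
  rewrite addr0 big_imset /=; last by move=> a b _ _; apply: maxrankfun_inj.
  by apply: eq_big => [k|k _]; rewrite ?inE // !mxE mulrC.
have /eqP u0 : u == 0 by rewrite -(mulmx_free_eq0 _ (maxrowsub_free M^T)) u_ker.
apply/matrixP => i j; rewrite (ord1 j) mxE.
have [/imsetP[k _ ->]|i_off] := boolP (i \in pivots); last by rewrite z_off ?inE.
by have := congr1 (fun A : 'rV__ => A 0 k) u0; rewrite !mxE.
Qed.

End Pivots.

Section BoxSolutions.

Variables (p m' m : nat) (M : 'M['F_p]_(m', m)).

Local Notation offsets w := {ffun 'I_m -> 'I_((\max_(i < m) w i).+1)}.

Definition box_point {W} (lo : 'cV[int]_m) (y : {ffun 'I_m -> 'I_W}) : 'cV[int]_m :=
  \col_i (lo i 0 + (y i : nat)%:Z).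

Definition box_solutions (b : 'cV[int]_m') (lo : 'cV[int]_m) (w : 'I_m -> nat) :
    {set offsets w} :=
  [set y : offsets w | [forall i, (y i <= w i)%N] &&
                       (M *m modp_vec p (box_point lo y) == modp_vec p b)].

Lemma boxcountE b lo w : boxcount M b lo w = #|box_solutions b lo w|.
Proof. by []. Qed.

Lemma box_solutionsP b lo w (y : offsets w) :
  reflect ((forall i, y i <= w i)%N /\
           M *m modp_vec p (box_point lo y) = modp_vec p b)
          (y \in box_solutions b lo w).
Proof.
rewrite inE; apply: (iffP andP) => [[/forallP ? /eqP ?]|[? ?]] //.
by split; [apply/forallP | apply/eqP].
Qed.

Lemma box_solutions_subr_ker {b lo w} {y y' : offsets w} :
  y \in box_solutions b lo w -> y' \in box_solutions b lo w ->
  M *m modp_vec p (box_point lo y - box_point lo y') = 0.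
Proof.
move=> /box_solutionsP[_ My] /box_solutionsP[_ My'].
by rewrite modp_vecB mulmxBr My My' subrr.
Qed.

Lemma boxcount_le_centred b N w :
  (boxcount M b N w <= boxcount M 0 (\col_i - (w i)%:Z) (fun i => 2 * w i))%N.
Proof.
rewrite !boxcountE; set S := box_solutions b N w.
have [->|[y0 y0S]] := set_0Vmem S; first by rewrite cards0.
have /box_solutionsP[y0w _] := y0S.
pose shift (y : offsets w) : offsets (fun i => 2 * w i)%N :=
  [ffun i => inord (y i + w i - y0 i)].
have shiftE (y : offsets w) i :
    (y i <= w i)%N -> shift y i = (y i + w i - y0 i)%N :> nat.
  move=> yw; rewrite ffunE inordK // ltnS.
  by apply: leq_trans (leq_bigmax (F := fun i => (2 * w i)%N) i); have := y0w i; lia.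
rewrite -(card_in_imset (f := shift)); last first.
  move=> y y' /box_solutionsP[yw _] /box_solutionsP[y'w _] /ffunP shift_eq.
  apply/ffunP => i; apply/val_inj => /=; have := congr1 val (shift_eq i).
  rewrite /= !shiftE //; have := y0w i.
  by move: (y i : nat) (y' i : nat) (y0 i : nat); lia.
apply/subset_leq_card/subsetP => _ /imsetP[y yS ->].
have /box_solutionsP[yw _] := yS.
apply/box_solutionsP; split=> [i|].
  by rewrite shiftE //; have := y0w i; have := yw i; lia.
have -> : box_point (\col_i - (w i)%:Z) (shift y) = box_point N y - box_point N y0.
  apply/matrixP => i j; rewrite !mxE shiftE //.
  by have := y0w i; have := yw i; move: (y i : nat) (y0 i : nat) (w i) (N i 0); lia.
by rewrite modp_vec0 (box_solutions_subr_ker yS y0S).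
Qed.

End BoxSolutions.

Section FoldPivots.

Variables (p m' m : nat) (M : 'M['F_p]_(m', m)).
Hypothesis p_pr : prime p.
Variables (b : 'cV[int]_m') (lo : 'cV[int]_m) (w : 'I_m -> nat).

Local Notation W := (\max_(i < m) w i).+1.
Local Notation S := (box_solutions M b lo w).

Lemma box_solutions_eqmod (y y' : {ffun 'I_m -> 'I_W}) :
  y \in S -> y' \in S -> {in ~: pivots M, forall i, y i = y' i} ->
  forall i, (y i = y' i %[mod p])%N.
Proof.
move=> yS y'S eq_off i.
set z := modp_vec p (box_point lo y - box_point lo y').
have zE k : z k 0 = (y k : nat)%:R - (y' k : nat)%:R.
  by rewrite !mxE opprD addrACA subrr add0r intrB.
have /matrixP/(_ i 0) : z = 0.
  apply: ker_eq0_off_pivots (box_solutions_subr_ker yS y'S) _.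
  by move=> k /eq_off; rewrite zE => ->; rewrite subrr.
by rewrite zE mxE => /eqP; rewrite subr_eq0 => /eqP /(Fp_nat_eqmod p_pr).
Qed.

(* Off the pivots keep y, on the pivots keep only the quotient by p: the
   residue there is determined by the other coordinates. *)
Definition fold_pivots (y : {ffun 'I_m -> 'I_W}) : {ffun 'I_m -> 'I_W} :=
  [ffun i => if i \in pivots M then inord (y i %/ p) else y i].

Lemma fold_pivotsE y i :
  fold_pivots y i = (if i \in pivots M then y i %/ p else y i)%N :> nat.
Proof.
rewrite ffunE; case: ifP => //= _.
by rewrite inordK //; apply: leq_ltn_trans (leq_div _ _) (ltn_ord _).
Qed.

Lemma fold_pivots_inj : {in S &, injective fold_pivots}.
Proof.
move=> y y' yS y'S /ffunP fold_eq.
have fold_eqE i : (if i \in pivots M then y i %/ p else y i)%N =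
                   (if i \in pivots M then y' i %/ p else y' i)%N.
  by rewrite -!fold_pivotsE fold_eq.
have eq_off : {in ~: pivots M, forall i, y i = y' i}.
  move=> i; rewrite inE => /negPf i_off.
  by apply/val_inj; have := fold_eqE i; rewrite i_off.
apply/ffunP => i; have [i_piv|/negPf i_off] := boolP (i \in pivots M); last first.
  by apply/val_inj; have := fold_eqE i; rewrite i_off.
apply/val_inj; have := fold_eqE i; rewrite i_piv /= => quot_eq.
rewrite [LHS](divn_eq _ p) [RHS](divn_eq _ p) quot_eq.
by rewrite (box_solutions_eqmod yS y'S eq_off).
Qed.

Lemma card_box_solutions_le (L : nat) :
  (0 < L <= p)%N -> (forall i, w i <= 4 * L)%N ->
  (#|S| <= 5 ^ m * L ^ (m - \rank M))%N.
Proof.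
move=> /andP[L_gt0 L_le_p] w_le.
pose c i := if i \in pivots M then 5%N else (4 * L).+1.
pose F i := [pred k : 'I_W | (k < c i)%N].
rewrite -(card_in_imset fold_pivots_inj).
apply: (@leq_trans #|family F|).
  apply/subset_leq_card/subsetP => _ /imsetP[y /box_solutionsP[yw _] ->].
  apply/familyP => i; rewrite inE fold_pivotsE /c.
  have := yw i; have := w_le i; case: ifP => _; last by lia.
  by rewrite ltn_divLR ?prime_gt0 //; lia.
rewrite card_family foldrE big_image /=.
apply: (@leq_trans (\prod_i (5 * (if i \in ~: pivots M then L else 1))%N)).
  apply: leq_prod => i _; apply: leq_trans (card_ord_lt _ _) _.
  by rewrite /c inE; case: ifP => _ /=; lia.
by rewrite big_split /= -big_mkcond /= !prod_nat_const card_ord card_off_pivots.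
Qed.

End FoldPivots.

Theorem lemma4p1 (m : nat) :
  (forall (p m' : nat) (M : 'M['F_p]_(m', m)) (L : nat) (Lv : 'I_m -> nat),
     prime p -> (1 <= L <= p)%N -> (forall i, L <= Lv i <= 2 * L)%N ->
     forall (N : 'cV[int]_m) (b : 'cV[int]_m'),
       (boxcount M b N Lv
         <= boxcount M 0 (\col_i (- (Lv i)%:Z)) (fun i => 2 * Lv i))%N)
  /\
  (exists C : nat,
     forall (p m' : nat) (M : 'M['F_p]_(m', m)) (L : nat) (Lv : 'I_m -> nat),
       prime p -> (1 <= L <= p)%N -> (forall i, L <= Lv i <= 2 * L)%N ->
       \rank M = minn m' m ->
       (boxcount M 0 (\col_i (- (Lv i)%:Z)) (fun i => 2 * Lv i)
         <= C * L ^ dimker M)%N).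
Proof.
split=> [p m' M L Lv _ _ _ N b|]; first exact: boxcount_le_centred.
exists (5 ^ m)%N => p m' M L Lv p_pr L_range Lv_range _.
rewrite boxcountE /dimker mxrank_ker mxrank_tr.
by apply: card_box_solutions_le => // i; have := Lv_range i; lia.
Qed.
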